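(* Let $(G,+,<)$ be an ordered abelian group (dense or discrete). Then $G$ is Dedekind complete if and only if $G$ satisfies Continuous Induction (CI).
   Context: An ordered abelian group $(G,+,<)$ is an abelian group with a linear order such that $x<y$ implies $x+z<y+z$ for all $x,y,z\in G$. A Dedekind cut is a nonempty downward closed subset $C\subseteq G$; it is proper if $C\neq G$. A gap is a proper cut with no least upper bound in $G$. $G$ is Dedekind complete if it has no gaps. Continuous Induction (CI) for $G$ is the statement: for every $S\subseteq G$, if (i) there is $g\in G$ with $(-\infty,g)\subseteq S$, and (ii) for every $x\in G$, if $(-\infty,x)\subseteq S$ then there is $y>x$ in $G$ with $(-\infty,y)\subseteq S$, then $S=G$. *)

(* the abelian group is a zmodType; the order is an explicit
   strict linear order relation [lt] on it, compatible with addition. *)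
From HB Require Import structures.
From mathcomp Require Import all_boot all_order all_algebra.
Set Implicit Arguments. Unset Strict Implicit. Unset Printing Implicit Defensive.
Import GRing.Theory.
Local Open Scope ring_scope.

Definition ordered_abelian_group (G : zmodType) (lt : G -> G -> Prop) : Prop :=
  (forall x, ~ lt x x) /\
  (forall x y z, lt x y -> lt y z -> lt x z) /\
  (forall x y, lt x y \/ x = y \/ lt y x) /\
  (forall x y z, lt x y -> lt (x + z) (y + z)).

Definition oag_le (G : zmodType) (lt : G -> G -> Prop) (x y : G) : Prop :=
  lt x y \/ x = y.

Definition dcut (G : zmodType) (lt : G -> G -> Prop) (C : G -> Prop) : Prop :=
  (exists x, C x) /\ (forall x y, C x -> oag_le lt y x -> C y).

Definition proper_cut (G : zmodType) (lt : G -> G -> Prop) (C : G -> Prop) : Prop :=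
  dcut lt C /\ exists x, ~ C x.

Definition is_lub (G : zmodType) (lt : G -> G -> Prop) (C : G -> Prop) (b : G) : Prop :=
  (forall c, C c -> oag_le lt c b) /\
  (forall b', (forall c, C c -> oag_le lt c b') -> oag_le lt b b').

Definition gap (G : zmodType) (lt : G -> G -> Prop) (C : G -> Prop) : Prop :=
  proper_cut lt C /\ ~ (exists b, is_lub lt C b).

Definition dedekind_complete (G : zmodType) (lt : G -> G -> Prop) : Prop :=
  forall C : G -> Prop, ~ gap lt C.

Definition below_in (G : zmodType) (lt : G -> G -> Prop) (x : G) (S : G -> Prop) : Prop :=
  forall z, lt z x -> S z.

Definition continuous_induction (G : zmodType) (lt : G -> G -> Prop) : Prop :=
  forall S : G -> Prop,
    (exists g, below_in lt g S) ->
    (forall x, below_in lt x S -> exists y, lt x y /\ below_in lt y S) ->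
    forall x, S x.

From mathcomp Require Import all_boot all_order all_algebra.
From Stdlib Require Import Classical.

Set Implicit Arguments.

(* Only the linear order matters.
   If CI fails for S, the points x with (-oo, x) in S form a proper cut whose
   supremum would again lie in that cut and could be pushed further, so the
   cut is a gap. Conversely a gap C has no maximum, and every point x with
   (-oo, x) in C lies in C (otherwise x would be its supremum), so C satisfies
   the hypotheses of CI and would be all of G. *)

Section StrictLinearOrder.

Variables (G : zmodType) (lt : G -> G -> Prop).
Hypothesis lt_irrefl : forall x, ~ lt x x.
Hypothesis lt_trans : forall x y z, lt x y -> lt y z -> lt x z.
Hypothesis lt_total : forall x y, lt x y \/ x = y \/ lt y x.

Lemma not_le_lt a b : ~ oag_le lt a b -> lt b a.
Proof.
  intros Hab. destruct (lt_total a b) as [h|[h|h]]; auto;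
  exfalso; apply Hab; unfold oag_le; auto.
Qed.

Lemma le_not_lt a b : oag_le lt a b -> ~ lt b a.
Proof.
  intros [h|<-] h'.
  - exact (lt_irrefl (lt_trans h h')).
  - exact (lt_irrefl h').
Qed.

Lemma is_lub_mem_ub (C : G -> Prop) a :
  C a -> (forall c, C c -> oag_le lt c a) -> is_lub lt C a.
Proof. intros Ca Hub. split; [exact Hub|]. intros b Hb. exact (Hb a Ca). Qed.

Lemma dcut_below_in (S : G -> Prop) g :
  below_in lt g S -> dcut lt (fun x => below_in lt x S).
Proof.
  intros Hg. split; [exists g; exact Hg|].
  intros a b Ha [Hba|<-] z Hz; [exact (Ha z (lt_trans Hz Hba))|exact (Ha z Hz)].
Qed.

Lemma below_in_lub (S : G -> Prop) b :
  is_lub lt (fun x => below_in lt x S) b -> below_in lt b S.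
Proof.
  intros [_ Hleast] z Hzb. apply NNPP; intros HSz.
  apply (@le_not_lt b z); [apply Hleast|exact Hzb].
  intros c Hc. apply NNPP; intros Hcz.
  exact (HSz (Hc z (not_le_lt Hcz))).
Qed.

Lemma dedekind_complete_continuous_induction :
  dedekind_complete lt -> continuous_induction lt.
Proof.
  intros Hcomplete S [g Hg] Hstep x. apply NNPP; intros HSx.
  apply (Hcomplete (fun z => below_in lt z S)). split.
  - split; [exact (dcut_below_in Hg)|].
    exists x. intros Hx. destruct (Hstep x Hx) as [y [Hxy Hy]].
    exact (HSx (Hy x Hxy)).
  - intros [b Hb]. destruct (Hstep b (below_in_lub Hb)) as [y [Hby Hy]].
    exact (le_not_lt (proj1 Hb y Hy) Hby).
Qed.

Lemma dcut_ub_not_mem (C : G -> Prop) a :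
  dcut lt C -> ~ C a -> forall c, C c -> oag_le lt c a.
Proof.
  intros [_ Hdown] Ca c Cc. apply NNPP; intros Hca.
  exact (Ca (Hdown c a Cc (or_introl (not_le_lt Hca)))).
Qed.

Lemma gap_no_max (C : G -> Prop) a :
  gap lt C -> C a -> exists d, C d /\ lt a d.
Proof.
  intros [_ Hnolub] Ca. apply NNPP; intros Hmax.
  apply Hnolub. exists a. apply is_lub_mem_ub; [exact Ca|].
  intros c Cc. apply NNPP; intros Hca.
  exact (Hmax (ex_intro _ c (conj Cc (not_le_lt Hca)))).
Qed.

Lemma gap_below_in_mem (C : G -> Prop) a :
  gap lt C -> below_in lt a C -> C a.
Proof.
  intros Hgap Ha. pose proof Hgap as [[Hcut _] Hnolub].
  apply NNPP; intros Ca. apply Hnolub. exists a.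
  split; [exact (dcut_ub_not_mem a Hcut Ca)|].
  intros b Hb. apply NNPP; intros Hab.
  destruct (gap_no_max _ Hgap (Ha b (not_le_lt Hab))) as [d [Cd Hbd]].
  exact (le_not_lt (Hb d Cd) Hbd).
Qed.

Lemma continuous_induction_dedekind_complete :
  continuous_induction lt -> dedekind_complete lt.
Proof.
  intros Hci C Hgap. pose proof Hgap as [[[[c Cc] Hdown] [x Cx]] _].
  apply Cx. apply (Hci C).
  - exists c. intros z Hz. exact (Hdown c z Cc (or_introl Hz)).
  - intros a Ha.
    destruct (gap_no_max _ Hgap (gap_below_in_mem Hgap Ha)) as [d [Cd Had]].
    exists d. split; [exact Had|].
    intros z Hz. exact (Hdown d z Cd (or_introl Hz)).
Qed.

End StrictLinearOrder.

Theorem proposition2p1 (G : zmodType) (lt : G -> G -> Prop) :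
  ordered_abelian_group lt ->
  (dedekind_complete lt <-> continuous_induction lt).
Proof.
  intros [Hirr [Htrans [Htotal _]]]. split.
  - exact (dedekind_complete_continuous_induction Hirr Htrans Htotal).
  - exact (continuous_induction_dedekind_complete Hirr Htrans Htotal).
Qed.
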